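(* Let $n\ge 3$. Consider the two-graph Moran process on $n$ vertices in which the resident graph $G_R$ is the clique $K_n$ and the mutant graph $G_M$ is the undirected star $K_{1,n-1}$. For every $r>0$, the fixation probability satisfies $$f_{G_R,G_M}(r)\le \frac{r^{n-1}}{(n-2)!}.$$
   Context: Two-graph Moran process: vertex set $V=\{1,\dots,n\}$; resident graph $G_R=(V,E_R)$ and mutant graph $G_M=(V,E_M)$, strongly connected, with row-stochastic weight matrices $W_R=[w^R_{ij}]$, $W_M=[w^M_{ij}]$ ($w^R_{ij}>0$ iff $(i,j)\in E_R$, similarly for $M$). The state is the mutant set $S$; residents have fitness $1$, mutants fitness $r>0$. Each step a vertex $i$ is chosen with probability proportional to fitness; if $i$ is a mutant, it picks $j$ with probability $w^M_{ij}$ and $j$ becomes a mutant; if a resident, it picks $j$ with probability $w^R_{ij}$ and $j$ becomes a resident. Absorption at $S=\emptyset$ or $S=V$ (fixation). The fixation probability $f_{G_R,G_M}(r)$ is the probability of fixation when starting with one mutant at a uniformly random vertex. Undirected graphs are unweighted: $w_{ij}=1/\deg(i)$ for each neighbour $j$ of $i$. *)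

From HB Require Import structures.
From mathcomp Require Import all_boot all_order all_algebra.
From mathcomp Require Import all_classical all_reals topology normedtype sequences.
Set Implicit Arguments. Unset Strict Implicit. Unset Printing Implicit Defensive.
Import Order.TTheory GRing.Theory Num.Theory numFieldNormedType.Exports.
Local Open Scope ring_scope.

(* Vertex set V = 'I_n; a state is the mutant set S : {set 'I_n}. *)

Definition fitness (R : realType) (n : nat) (r : R) (S : {set 'I_n}) (i : 'I_n) : R :=
  if i \in S then r else 1.

Definition total_fitness (R : realType) (n : nat) (r : R) (S : {set 'I_n}) : R :=
  \sum_(i : 'I_n) fitness r S i.

(* State reached when i reproduces onto j. *)
Definition moran_next (n : nat) (S : {set 'I_n}) (i j : 'I_n) : {set 'I_n} :=
  if i \in S then j |: S else S :\ j.

(* One-step transition probability of the two-graph Moran process,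
   WR / WM the (row-stochastic) resident / mutant weight matrices. *)
Definition moran_trans (R : realType) (n : nat) (WR WM : 'I_n -> 'I_n -> R) (r : R)
  (S T : {set 'I_n}) : R :=
  \sum_(i : 'I_n) \sum_(j : 'I_n)
     (fitness r S i / total_fitness r S) * (if i \in S then WM i j else WR i j)
     * (moran_next S i j == T)%:R.

Fixpoint moran_dist (R : realType) (n : nat) (WR WM : 'I_n -> 'I_n -> R) (r : R)
  (S0 : {set 'I_n}) (t : nat) {struct t} : {set 'I_n} -> R :=
  match t with
  | 0 => fun T => (T == S0)%:R
  | t'.+1 => fun T => \sum_(S : {set 'I_n}) moran_dist WR WM r S0 t' S * moran_trans WR WM r S T
  end.

(* Fixation probability from S0: probability of eventual absorption in V
   (V is absorbing, so this is the limit of P(X_t = V)). *)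
Definition fixation_from (R : realType) (n : nat) (WR WM : 'I_n -> 'I_n -> R) (r : R)
  (S0 : {set 'I_n}) : R :=
  limn (fun t => moran_dist WR WM r S0 t [set: 'I_n]).

Definition fixation_probability (R : realType) (n : nat) (WR WM : 'I_n -> 'I_n -> R)
  (r : R) : R :=
  (n%:R)^-1 * \sum_(i : 'I_n) fixation_from WR WM r [set i].

Definition unweighted (R : realType) (n : nat) (e : rel 'I_n) (i j : 'I_n) : R :=
  if e i j then (#|[set k | e i k]|%:R)^-1 else 0.

Definition clique_rel (n : nat) : rel 'I_n := fun i j => i != j.

Definition star_rel (n : nat) (c : 'I_n) : rel 'I_n := fun i j => (i == c) != (j == c).

From HB Require Import structures.
From mathcomp Require Import all_boot all_order all_algebra.
From mathcomp Require Import all_classical all_reals topology normedtype sequences.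
From mathcomp Require Import ring lra zify.
Import Order.TTheory GRing.Theory Num.Theory numFieldNormedType.Exports.
Set Implicit Arguments. Unset Strict Implicit. Unset Printing Implicit Defensive.
Local Open Scope ring_scope.

(* A supermartingale argument.  Value a mutant set of size k by A_k if it
   contains the centre c of the star, by A_(k+1) if it does not and k >= 2, and
   by A_k otherwise, where A_0 = 0 and A_(k+1) = 1 + sum_(j=1..k) (j-1)!/r^j.
   With mutants spreading along the star and residents along the clique, this
   potential has nonpositive expected increment in every state, so its
   expectation never exceeds its initial value A_1 = 1.  As V is absorbing with
   potential A_n, P(X_t = V) <= 1/A_n for all t, and A_n >= (n-2)!/r^(n-1). *)

Lemma setU1_id (T : finType) (A : {set T}) a : a \in A -> a |: A = A.
Proof. by move=> aA; apply/setP => x; rewrite !inE; case: eqP => // ->. Qed.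

Lemma setD1_id (T : finType) (A : {set T}) a : a \notin A -> A :\ a = A.
Proof.
by move=> aA; apply/setP => x; rewrite !inE; case: eqP => // ->; rewrite (negbTE aA).
Qed.

Lemma card_setD1 (T : finType) (A : {set T}) a : a \in A -> #|A :\ a| = #|A|.-1.
Proof. by move=> aA; rewrite [in RHS](cardsD1 a A) aA. Qed.

Section MoranChain.

Variables (R : realType) (n : nat) (WR WM : 'I_n -> 'I_n -> R) (r : R).
Hypotheses (WR_ge0 : forall i j, 0 <= WR i j) (WM_ge0 : forall i j, 0 <= WM i j).
Hypotheses (WR_row : forall i, \sum_j WR i j = 1) (WM_row : forall i, \sum_j WM i j = 1).
Hypotheses (r_gt0 : 0 < r) (n_gt0 : (0 < n)%N).
Implicit Types (S T : {set 'I_n}) (psi : {set 'I_n} -> R).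

Local Notation trans := (moran_trans WR WM r).
Local Notation dist := (moran_dist WR WM r).
Local Notation W S i j := (if i \in S then WM i j else WR i j).

Definition moran_drift (psi : {set 'I_n} -> R) (S : {set 'I_n}) : R :=
  r * \sum_(i in S) \sum_j WM i j * (psi (j |: S) - psi S)
  + \sum_(i in ~: S) \sum_j WR i j * (psi (S :\ j) - psi S).

Lemma fitness_gt0 S i : 0 < fitness r S i.
Proof. by rewrite /fitness; case: ifP. Qed.

Lemma total_fitness_gt0 S : 0 < total_fitness r S.
Proof.
rewrite /total_fitness (bigD1 (Ordinal n_gt0)) //= ltr_pwDl ?fitness_gt0 //.
by apply: sumr_ge0 => i _; exact/ltW/fitness_gt0.
Qed.

Lemma moran_trans_ge0 S T : 0 <= trans S T.
Proof.
apply: sumr_ge0 => i _; apply: sumr_ge0 => j _.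
rewrite !mulr_ge0 ?invr_ge0 ?ler0n ?(ltW (fitness_gt0 S i)) ?(ltW (total_fitness_gt0 S)) //.
by case: ifP.
Qed.

Lemma moran_trans_sumE S (f : {set 'I_n} -> R) :
  \sum_T trans S T * f T
  = \sum_i fitness r S i / total_fitness r S * \sum_j W S i j * f (moran_next S i j).
Proof.
under eq_bigr do rewrite mulr_suml.
rewrite exchange_big; apply: eq_bigr => i _; rewrite mulr_sumr.
under eq_bigr do rewrite mulr_suml.
rewrite exchange_big; apply: eq_bigr => j _.
rewrite (bigD1 (moran_next S i j)) //= eqxx mulr1 big1 ?addr0 ?mulrA // => T hT.
by rewrite eq_sym (negbTE hT) mulr0 mul0r.
Qed.

Lemma moran_trans_sum1 S : \sum_T trans S T = 1.
Proof.
transitivity (\sum_T trans S T * 1); first by apply: eq_bigr => T _; rewrite mulr1.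
rewrite moran_trans_sumE.
rewrite (eq_bigr (fun i => fitness r S i / total_fitness r S)) => [|i _].
  by rewrite -mulr_suml mulfV // gt_eqF // total_fitness_gt0.
rewrite -[RHS]mulr1; congr (_ * _).
by under eq_bigr do rewrite mulr1; case: (i \in S).
Qed.

Lemma moran_trans_expect S psi :
  \sum_T trans S T * psi T = psi S + (total_fitness r S)^-1 * moran_drift psi S.
Proof.
have -> : \sum_T trans S T * psi T = psi S + \sum_T trans S T * (psi T - psi S).
  under [in RHS]eq_bigr do rewrite mulrBr.
  by rewrite sumrB -mulr_suml moran_trans_sum1 mul1r addrC subrK.
congr (_ + _); rewrite moran_trans_sumE /moran_drift mulr_sumr (bigID (mem S)) /=.
rewrite [X in _ + X](eq_bigl (fun i => i \in ~: S)); last by move=> i; rewrite inE.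
rewrite mulrDr !mulr_sumr; congr (_ + _); apply: eq_bigr => i iS.
  by rewrite /fitness /moran_next iS [r / _]mulrC -mulrA.
by rewrite /fitness /moran_next !inE in iS *; rewrite (negbTE iS) mul1r.
Qed.

Lemma moran_trans_setT : trans [set: 'I_n] [set: 'I_n] = 1.
Proof.
rewrite -(moran_trans_sum1 [set: 'I_n]).
transitivity (\sum_T trans [set: 'I_n] T * (T == [set: 'I_n])%:R).
  rewrite (bigD1 [set: 'I_n]) //= eqxx mulr1 big1 ?addr0 // => T /negbTE->.
  by rewrite mulr0.
under [RHS]eq_bigr do rewrite -[trans _ _]mulr1.
rewrite !moran_trans_sumE; apply: eq_bigr => i _; congr (_ * _).
by apply: eq_bigr => j _; rewrite /moran_next inE setU1_id ?inE ?eqxx.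
Qed.

Lemma moran_dist_ge0 S0 t T : 0 <= dist S0 t T.
Proof.
elim: t T => [|t IH] T /=; first by case: (_ == _).
by apply: sumr_ge0 => S _; rewrite mulr_ge0 ?moran_trans_ge0.
Qed.

Lemma moran_dist_expect_le psi S0 t : (forall S, moran_drift psi S <= 0) ->
  \sum_T dist S0 t T * psi T <= psi S0.
Proof.
move=> drift_le0; elim: t => [|t IH] /=.
  rewrite (bigD1 S0) //= eqxx mul1r big1 ?addr0 // => T /negbTE->.
  by rewrite mul0r.
apply: le_trans IH; under eq_bigr do rewrite mulr_suml.
rewrite exchange_big; apply: ler_sum => S _.
under eq_bigr do rewrite -mulrA.
rewrite -mulr_sumr moran_trans_expect ler_wpM2l ?moran_dist_ge0 // gerDl.
by rewrite mulr_ge0_le0 // invr_ge0 ltW ?total_fitness_gt0.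
Qed.

Lemma moran_dist_setT_nondecreasing S0 :
  nondecreasing_seq (fun t => dist S0 t [set: 'I_n]).
Proof.
apply/nondecreasing_seqP => t /=.
rewrite (bigD1 [set: 'I_n]) //= moran_trans_setT mulr1 lerDl.
by apply: sumr_ge0 => S _; rewrite mulr_ge0 ?moran_dist_ge0 ?moran_trans_ge0.
Qed.

Lemma fixation_from_le psi S0 :
  (forall S, 0 <= psi S) -> (forall S, moran_drift psi S <= 0) -> 0 < psi [set: 'I_n] ->
  fixation_from WR WM r S0 <= psi S0 / psi [set: 'I_n].
Proof.
move=> psi_ge0 drift_le0 psiT_gt0.
have dist_le t : dist S0 t [set: 'I_n] <= psi S0 / psi [set: 'I_n].
  rewrite ler_pdivlMr // (le_trans _ (moran_dist_expect_le S0 t drift_le0)) //.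
  rewrite [leRHS](bigD1 [set: 'I_n]) //= lerDl.
  by apply: sumr_ge0 => T _; rewrite mulr_ge0 ?moran_dist_ge0.
apply: limr_le; last exact: nearW.
apply: nondecreasing_is_cvgn; first exact: moran_dist_setT_nondecreasing.
by exists (psi S0 / psi [set: 'I_n]) => _ [t _ <-].
Qed.

End MoranChain.

Lemma unweighted_ge0 (R : realType) n (e : rel 'I_n) i j : 0 <= unweighted R e i j.
Proof. by rewrite /unweighted; case: (e i j); rewrite ?invr_ge0. Qed.

Lemma unweighted_row (R : realType) n (e : rel 'I_n) i :
  (exists j, e i j) -> \sum_j unweighted R e i j = 1.
Proof.
move=> [j eij]; rewrite /unweighted -big_mkcond /= sumr_const.
rewrite (eq_card (B := [set k | e i k])) => [|k]; last by rewrite inE.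
rewrite -[_ *+ _]mulr_natr mulVf // pnatr_eq0 -lt0n card_gt0.
by apply/set0Pn; exists j; rewrite inE.
Qed.

Section CliqueStar.

Variables (R : realType) (n : nat) (c : 'I_n) (r : R).
Hypothesis n_gt1 : (1 < n)%N.
Implicit Types (S : {set 'I_n}) (psi : {set 'I_n} -> R).

Local Notation WK := (unweighted R (@clique_rel n)).
Local Notation WS := (unweighted R (star_rel c)).

Lemma clique_weight i j : WK i j = if i != j then n.-1%:R^-1 else 0.
Proof.
rewrite /unweighted /clique_rel (_ : [set k | i != k] = [set~ i]) ?cardsC1 ?card_ord //.
by apply/setP => k; rewrite !inE eq_sym.
Qed.

Lemma star_weight_centre j : WS c j = if j != c then n.-1%:R^-1 else 0.
Proof.
rewrite /unweighted /star_rel eqxx (_ : [set k | true != (k == c)] = [set~ c]).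
  by rewrite cardsC1 card_ord.
by apply/setP => k; rewrite !inE.
Qed.

Lemma star_weight_leaf i j : i != c -> WS i j = (j == c)%:R.
Proof.
move=> /negbTE ic; rewrite /unweighted /star_rel ic (_ : [set k | _] = [set c]).
  by rewrite cards1 invr1; case: (j == c).
by apply/setP => k; rewrite !inE; case: (k == c).
Qed.

Lemma exists_neq (i : 'I_n) : exists j : 'I_n, i != j.
Proof.
have n_gt0 := ltnW n_gt1.
case: (eqVneq i (Ordinal n_gt0)) => [->|]; last by exists (Ordinal n_gt0).
by exists (Ordinal n_gt1); apply/eqP => /(congr1 val).
Qed.

Lemma clique_row i : \sum_j WK i j = 1.
Proof. exact/unweighted_row/exists_neq. Qed.

Lemma star_row i : \sum_j WS i j = 1.
Proof.
apply: unweighted_row; case: (eqVneq i c) => [->|ic]; rewrite /star_rel /=.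
  have [j cj] := exists_neq c.
  by exists j; rewrite eqxx [j == c]eq_sym (negbTE cj).
by exists c; rewrite eqxx (negbTE ic).
Qed.

Lemma clique_loss psi S i : i \notin S ->
  \sum_j WK i j * (psi (S :\ j) - psi S) = n.-1%:R^-1 * \sum_(j in S) (psi (S :\ j) - psi S).
Proof.
move=> iS; rewrite mulr_sumr [RHS]big_mkcond /=; apply: eq_bigr => j _.
rewrite clique_weight; case: (boolP (j \in S)) => jS; last by rewrite setD1_id // subrr mulr0.
by rewrite ifT //; apply: contraNneq iS => ->.
Qed.

Lemma star_gain_centre psi S : c \in S ->
  \sum_j WS c j * (psi (j |: S) - psi S) = n.-1%:R^-1 * \sum_(j in ~: S) (psi (j |: S) - psi S).
Proof.
move=> cS; rewrite mulr_sumr [RHS]big_mkcond /=; apply: eq_bigr => j _.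
rewrite star_weight_centre inE; case: (boolP (j \in S)) => jS /=.
  by rewrite setU1_id // subrr mulr0.
by rewrite ifT //; apply: contraNneq jS => ->.
Qed.

Lemma star_gain_leaf psi S i : i != c ->
  \sum_j WS i j * (psi (j |: S) - psi S) = psi (c |: S) - psi S.
Proof.
move=> ic; rewrite (bigD1 c) //= star_weight_leaf // eqxx mul1r big1 ?addr0 // => j jc.
by rewrite star_weight_leaf // (negbTE jc) mul0r.
Qed.

Lemma clique_resident_drift psi S :
  \sum_(i in ~: S) \sum_j WK i j * (psi (S :\ j) - psi S)
  = #|~: S|%:R / n.-1%:R * \sum_(j in S) (psi (S :\ j) - psi S).
Proof.
rewrite (eq_bigr (fun=> n.-1%:R^-1 * \sum_(j in S) (psi (S :\ j) - psi S))) => [|i].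
  by rewrite sumr_const -[_ *+ #|~: S|]mulr_natl mulrA.
by rewrite inE => /clique_loss->.
Qed.

Lemma clique_star_drift_centre psi S : c \in S ->
  moran_drift WK WS r psi S
  = n.-1%:R^-1 * (r * \sum_(j in ~: S) (psi (j |: S) - psi S)
                  + #|~: S|%:R * \sum_(j in S) (psi (S :\ j) - psi S)).
Proof.
move=> cS; rewrite /moran_drift clique_resident_drift (big_setD1 c cS) /=.
rewrite star_gain_centre // [X in r * (_ + X)]big1 => [|i]; first by rewrite addr0; ring.
by rewrite !inE => /andP[ic _]; rewrite star_gain_leaf // setU1_id // subrr.
Qed.

Lemma clique_star_drift_leaves psi S : c \notin S ->
  moran_drift WK WS r psi S
  = #|S|%:R * (r * (psi (c |: S) - psi S))
    + #|~: S|%:R / n.-1%:R * \sum_(j in S) (psi (S :\ j) - psi S).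
Proof.
move=> cS; rewrite /moran_drift clique_resident_drift.
rewrite (eq_bigr (fun=> psi (c |: S) - psi S)) => [|i iS]; last first.
  by rewrite star_gain_leaf //; apply: contraNneq cS => <-.
by rewrite sumr_const -[_ *+ #|S|]mulr_natl mulrCA.
Qed.

End CliqueStar.

Definition leaf_index (k : nat) : nat := if (2 <= k)%N then k.+1 else k.

Lemma leaf_index_le : {homo leaf_index : i j / (i <= j)%N}.
Proof. by move=> i j ij; rewrite /leaf_index; do 2![case: ifP] => //; lia. Qed.

Section Potential.

Variables (R : realType) (r : R).
Hypothesis r_gt0 : 0 < r.

Definition pot_step (k : nat) : R := if k is k'.+1 then k'`!%:R / r ^+ k else 1.

Definition pot (k : nat) : R := \sum_(i < k) pot_step i.

Lemma pot_step_gt0 k : 0 < pot_step k.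
Proof. by case: k => [|k] //=; rewrite divr_gt0 ?exprn_gt0 ?ltr0n ?fact_gt0. Qed.

Lemma potS k : pot k.+1 = pot k + pot_step k.
Proof. exact: big_ord_recr. Qed.

Lemma pot0 : pot 0 = 0.
Proof. exact: big_ord0. Qed.

Lemma pot1 : pot 1 = 1.
Proof. by rewrite potS pot0 add0r. Qed.

Lemma pot_ge0 k : 0 <= pot k.
Proof. by apply: sumr_ge0 => i _; exact/ltW/pot_step_gt0. Qed.

Lemma pot_le : {homo pot : i j / (i <= j)%N >-> i <= j}.
Proof.
move=> i j /subnK <-; elim: (j - i)%N => [|d IH] //.
by rewrite addSn potS (le_trans IH) // lerDl ltW ?pot_step_gt0.
Qed.

Lemma mulr_pot_step1 : r * pot_step 1 = 1.
Proof. by rewrite /= fact0 expr1; field; rewrite gt_eqF. Qed.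

Lemma mulr_pot_stepSS k : r * pot_step k.+2 = k.+1%:R * pot_step k.+1.
Proof.
by rewrite /= factS natrM exprS; field; rewrite expf_neq0 // gt_eqF.
Qed.

Lemma pot_inv_le k : (pot k.+2)^-1 <= r ^+ k.+1 / k`!%:R.
Proof.
have step_gt0 := pot_step_gt0 k.+1.
have step_le : pot_step k.+1 <= pot k.+2 by rewrite potS lerDr pot_ge0.
by rewrite -invf_div lef_pV2 ?posrE // (lt_le_trans step_gt0).
Qed.

Lemma pot_centre_balance k : (0 < k)%N ->
  r * pot_step k + (pot (leaf_index k.-1) - pot k) + (pot k.-1 - pot k) *+ k.-1 <= 0.
Proof.
case: k => [|[|[|k]]] // _.
- by rewrite mulr_pot_step1 // pot1 pot0 /= mulr0n add0r addr0 subrr.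
- rewrite mulr_pot_stepSS // [leaf_index _]/= [_.-1]/= [pot 2]potS mulr1n mul1r.
  by have := pot_step_gt0 1; lra.
- rewrite mulr_pot_stepSS // [leaf_index _]/= [_.-1]/= subrr addr0 [pot k.+3]potS.
  by rewrite opprD addNKr mulNrn mulr_natl subrr.
Qed.

(* The shift in [leaf_index] means that a resident replacing the centre among
   k + 1 >= 3 mutants leaves the potential unchanged. *)
Definition star_potential n (c : 'I_n) (S : {set 'I_n}) : R :=
  pot (if c \in S then #|S| else leaf_index #|S|).

Lemma star_potential_in n (c : 'I_n) (S : {set 'I_n}) :
  c \in S -> star_potential c S = pot #|S|.
Proof. by rewrite /star_potential => ->. Qed.

Lemma star_potential_out n (c : 'I_n) (S : {set 'I_n}) :
  c \notin S -> star_potential c S = pot (leaf_index #|S|).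
Proof. by rewrite /star_potential => /negbTE->. Qed.

Lemma star_potential_set1 n (c : 'I_n) i : star_potential c [set i] = 1.
Proof. by rewrite /star_potential cards1; case: ifP => _; exact: pot1. Qed.

End Potential.

Section StarPotentialDrift.

Variables (R : realType) (n : nat) (c : 'I_n) (r : R).
Hypotheses (n_gt1 : (1 < n)%N) (r_gt0 : 0 < r).
Implicit Types (S : {set 'I_n}).

Local Notation psi := (star_potential r c).
Local Notation WK := (unweighted R (@clique_rel n)).
Local Notation WS := (unweighted R (star_rel c)).

Lemma star_potential_gain_centre S : c \in S ->
  \sum_(j in ~: S) (psi (j |: S) - psi S) = pot_step r #|S| *+ #|~: S|.
Proof.
move=> cS; rewrite -sumr_const; apply: eq_bigr => j; rewrite inE => jS.
rewrite !star_potential_in ?setU1r // cardsU1 jS add1n potS.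
by rewrite addrC addKr.
Qed.

Lemma star_potential_loss_centre S : c \in S ->
  \sum_(j in S) (psi (S :\ j) - psi S)
  = (pot r (leaf_index #|S|.-1) - pot r #|S|) + (pot r #|S|.-1 - pot r #|S|) *+ #|S|.-1.
Proof.
move=> cS.
rewrite (big_setD1 c cS) /= star_potential_out ?setD11 // star_potential_in // card_setD1 //.
congr (_ + _); rewrite -[X in _ *+ X](card_setD1 cS) -sumr_const.
apply: eq_bigr => j; rewrite !inE => /andP[jc jS].
have cSj : c \in S :\ j by rewrite !inE cS eq_sym jc.
by rewrite !star_potential_in // card_setD1.
Qed.

Lemma star_potential_loss_leaves S : c \notin S ->
  \sum_(j in S) (psi (S :\ j) - psi S)
  = (pot r (leaf_index #|S|.-1) - pot r (leaf_index #|S|)) *+ #|S|.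
Proof.
move=> cS; rewrite -sumr_const; apply: eq_bigr => j jS.
have cSj : c \notin S :\ j by rewrite !inE (negbTE cS) andbF.
by rewrite !star_potential_out // card_setD1.
Qed.

Lemma star_potential_drift_le0 S : moran_drift WK WS r psi S <= 0.
Proof.
have n1_gt0 : 0 < n.-1%:R :> R by rewrite ltr0n; lia.
have cardSC : (#|S| + #|~: S| = n)%N by rewrite cardsC card_ord.
case: (boolP (c \in S)) => cS.
  have S_gt0 : (0 < #|S|)%N by rewrite card_gt0; apply/set0Pn; exists c.
  rewrite clique_star_drift_centre // star_potential_gain_centre //.
  rewrite star_potential_loss_centre // -[_ *+ #|~: S|]mulr_natl mulrCA -mulrDr addrA.
  by rewrite mulr_ge0_le0 ?invr_ge0 ?(ltW n1_gt0) // mulr_ge0_le0 ?pot_centre_balance.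
rewrite clique_star_drift_leaves // star_potential_loss_leaves //.
rewrite star_potential_in ?setU11 // star_potential_out // cardsU1 cS add1n.
move: cardSC; case: #|S| => [|[|k]] cardSC.
- by rewrite mul0r mulr0n mulr0 addr0.
- rewrite (_ : #|~: S| = n.-1); last by lia.
  rewrite (_ : leaf_index 1 = 1%N) // (_ : leaf_index 0 = 0%N) // potS.
  rewrite [pot r 1 + _ - _]addrAC subrr add0r mulr_pot_step1 // mulfV ?gt_eqF // pot1 pot0.
  by rewrite !mul1r mulr1n add0r addrN.
- rewrite (_ : leaf_index k.+2 = k.+3) // subrr mulr0 mulr0 add0r.
  rewrite mulr_ge0_le0 ?divr_ge0 ?(ltW n1_gt0) // mulrn_wle0 // subr_le0.
  by have := pot_le r_gt0 (leaf_index_le (leqnSn k.+1)).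
Qed.

Lemma clique_star_fixation_from_le S0 :
  fixation_from WK WS r S0 <= psi S0 / pot r n.
Proof.
have psiT : psi [set: 'I_n] = pot r n by rewrite star_potential_in ?inE // cardsT card_ord.
rewrite -psiT; apply: fixation_from_le => //.
- exact: unweighted_ge0.
- exact: unweighted_ge0.
- exact: clique_row.
- exact: star_row.
- exact: ltnW.
- by move=> S; rewrite /star_potential pot_ge0.
- exact: star_potential_drift_le0.
- by rewrite psiT (lt_le_trans ltr01) // -(pot1 r) pot_le // ltnW.
Qed.

End StarPotentialDrift.

Unset Implicit Arguments.

Theorem theorem4 (R : realType) (n : nat) (c : 'I_n) (r : R) :
  (3 <= n)%N -> 0 < r ->
  fixation_probability (unweighted R (@clique_rel n)) (unweighted R (star_rel c)) r
    <= r ^+ n.-1 / ((n.-2)`!)%:R.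
Proof.
move=> n_ge3 r_gt0; have n_gt1 : (1 < n)%N by exact: ltnW.
have fix_le i : fixation_from (unweighted R (@clique_rel n)) (unweighted R (star_rel c)) r [set i]
                <= (pot r n)^-1.
  by rewrite -[_^-1]mul1r -(star_potential_set1 r c i) clique_star_fixation_from_le.
apply: le_trans (_ : n%:R^-1 * \sum_(i < n) (pot r n)^-1 <= _).
  by rewrite ler_wpM2l ?invr_ge0 // ler_sum.
rewrite sumr_const card_ord -[(pot r n)^-1 *+ n]mulr_natl.
rewrite mulKf ?pnatr_eq0 -?lt0n ?(ltnW n_gt1) //.
by case: n c n_ge3 {fix_le n_gt1} => [|[|n]] // c _; exact: pot_inv_le r_gt0 n.
Qed.
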